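(* Let $(\mathcal{S},\mathcal{A},\tau,\mu_0,\gamma)$ be fixed, and fix a selection rule $g$ assigning to each nonempty $B\subseteq\mathcal{A}$ a distribution $g(B)\in\Delta(\mathcal{A})$ with support exactly $B$. For a reward function $R$, let $\pi_R(s)=g(\arg\max_a A^\star_R(s,a))$ (a maximally supportive optimal policy), let $\Delta_R$ be the distribution over trajectories obtained by drawing $S_0\sim\mu_0$ and following $\pi_R$ with transitions from $\tau$, and let $\mathfrak{S}_R$ be the set of states visited with positive probability under $\Delta_R$. Let $\mathfrak{O}_R$ be the set of functions $\mathcal{O}:\mathcal{S}\to\mathcal{P}(\mathcal{A})\setminus\{\emptyset\}$ with $\mathcal{O}(s)=\arg\max_a A^\star_R(s,a)$ for all $s\in\mathfrak{S}_R$. Then for all reward functions $R,R'$: $\Delta_R=\Delta_{R'}$ if and only if $R'$ is produced from $R$ by an optimality-preserving transformation with some $\mathcal{O}\in\mathfrak{O}_R$.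
   Context: An MDP is $(\mathcal{S},\mathcal{A},\tau,\mu_0,R,\gamma)$ with finite $\mathcal{S},\mathcal{A}$, $\tau:\mathcal{S}\times\mathcal{A}\to\Delta(\mathcal{S})$, $\mu_0\in\Delta(\mathcal{S})$, $R:\mathcal{S}\times\mathcal{A}\times\mathcal{S}\to\mathbb{R}$, $\gamma\in(0,1)$. $A^\star_R$ is the optimal advantage function for reward $R$ ($Q^\star-V^\star$ of a policy maximising $\mathbb{E}_{S_0\sim\mu_0}[V^\pi(S_0)]$). A maximally supportive optimal policy gives positive probability to all optimal actions in every state; it is assumed its action probabilities in each state depend only on the set of optimal actions there (formalised by $g$). Given $\mathcal{O}:\mathcal{S}\to\mathcal{P}(\mathcal{A})\setminus\{\emptyset\}$, $R'$ is produced from $R$ by an optimality-preserving transformation with $\mathcal{O}$ if there exists $\Psi:\mathcal{S}\to\mathbb{R}$ with $\mathbb{E}_{S'\sim\tau(s,a)}[R'(s,a,S')+\gamma\Psi(S')]\le\Psi(s)$ for all $s,a$, with equality iff $a\in\mathcal{O}(s)$. *)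

From HB Require Import structures.
From mathcomp Require Import all_boot all_order all_algebra.
From mathcomp Require Import all_classical all_reals all_analysis.
Set Implicit Arguments. Unset Strict Implicit. Unset Printing Implicit Defensive.
Import Order.TTheory GRing.Theory Num.Theory.
Import numFieldNormedType.Exports.
Local Open Scope classical_set_scope.
Local Open Scope ring_scope.

Section MDP.
Variables (R : realType) (S A : finType).
(* transition kernel: tau s a s' = probability of s' after (s,a) *)
Variable tau : S -> A -> S -> R.
Variable mu0 : S -> R.
Variable gamma : R.

Definition is_distr (T : finType) (p : T -> R) : Prop :=
  (forall x, 0 <= p x) /\ \sum_(x : T) p x = 1.

Definition is_policy (pi : S -> A -> R) : Prop := forall s, is_distr (pi s).

Fixpoint Vfin (pi : S -> A -> R) (rw : S -> A -> S -> R) (n : nat) (s : S) : R :=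
  match n with
  | 0 => 0
  | n'.+1 => \sum_(a : A) pi s a *
               \sum_(s' : S) tau s a s' * (rw s a s' + gamma * Vfin pi rw n' s')
  end.

Definition Vpi (pi : S -> A -> R) (rw : S -> A -> S -> R) (s : S) : R :=
  limn (fun n => Vfin pi rw n s).

Definition Vstar (rw : S -> A -> S -> R) (s : S) : R :=
  sup [set Vpi pi rw s | pi in is_policy].

Definition Qstar (rw : S -> A -> S -> R) (s : S) (a : A) : R :=
  \sum_(s' : S) tau s a s' * (rw s a s' + gamma * Vstar rw s').

Definition Astar (rw : S -> A -> S -> R) (s : S) (a : A) : R :=
  Qstar rw s a - Vstar rw s.

Definition opt_acts (rw : S -> A -> S -> R) (s : S) : {set A} :=
  [set a | [forall b, Astar rw s b <= Astar rw s a]].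

Variable g : {set A} -> A -> R.

Definition piR (rw : S -> A -> S -> R) (s : S) (a : A) : R :=
  g (opt_acts rw s) a.

(* Probability, under the policy pi, of the path continuing with the
   state-action pairs (s,a) :: rest, given it is in state s. *)
Fixpoint chain_prob (pi : S -> A -> R) (sa : S * A) (rest : seq (S * A)) : R :=
  match rest with
  | [::] => pi sa.1 sa.2
  | sa' :: rest' => pi sa.1 sa.2 * tau sa.1 sa.2 sa'.1 * chain_prob pi sa' rest'
  end.

(* Probability under Delta_R that a trajectory starts with the given
   finite prefix (S_0,A_0),...,(S_n,A_n) of state-action pairs
   (cylinder-set probability). *)
Definition prefix_prob (rw : S -> A -> S -> R) (p : seq (S * A)) : R :=
  match p with
  | [::] => 1
  | sa :: rest => mu0 sa.1 * chain_prob (piR rw) sa rest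
  end.

(* Delta_R = Delta_R' : the two trajectory distributions agree on all
   cylinder sets (which determine a distribution on infinite trajectories). *)
Definition traj_distr_eq (rw rw' : S -> A -> S -> R) : Prop :=
  forall p : seq (S * A), prefix_prob rw p = prefix_prob rw' p.

Definition visited (rw : S -> A -> S -> R) (s : S) : Prop :=
  exists (p : seq (S * A)) (a : A), 0 < prefix_prob rw (rcons p (s, a)).

Definition frakO (rw : S -> A -> S -> R) (O : S -> {set A}) : Prop :=
  (forall s, O s != finset.set0) /\ (forall s, visited rw s -> O s = opt_acts rw s).

Definition opt_preserving (rw rw' : S -> A -> S -> R) (O : S -> {set A}) : Prop :=
  exists Psi : S -> R, forall s a,
    \sum_(s' : S) tau s a s' * (rw' s a s' + gamma * Psi s') <= Psi s /\
    (\sum_(s' : S) tau s a s' * (rw' s a s' + gamma * Psi s') = Psi s <-> a \in O s).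

End MDP.

(* Since g(B) has support exactly B, the cylinder probabilities of Delta_R and
   Delta_R' agree, prefix by prefix, iff pi_R and pi_R' agree on every state
   that Delta_R visits, i.e. iff argmax A*_R = argmax A*_R' there.  On the other
   side, the potential Psi of an optimality-preserving transformation with O
   solves the Bellman optimality equation for R', with equality exactly on O.
   That equation has a unique solution because the Bellman operator is a
   gamma-contraction, so Psi = V*_R' and O = argmax A*_R' everywhere. *)

From Pilot Require Import Defs.
From mathcomp Require Import all_boot all_order all_algebra.
From mathcomp Require Import all_classical all_reals all_analysis.
From mathcomp Require Import ring lra.
Import Order.TTheory GRing.Theory Num.Theory.
Import numFieldNormedType.Exports.
Local Open Scope classical_set_scope.
Local Open Scope ring_scope.

Section Averages.
Context {R : realType} {T : finType} {w : T -> R}.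
Hypothesis w_distr : is_distr w.

Lemma distr_avg_le (Z : T -> R) m : (forall t, Z t <= m) -> \sum_t w t * Z t <= m.
Proof.
case: w_distr => w_ge0 w_sum1 Z_le; rewrite -[m]mul1r -w_sum1 mulr_suml.
by apply: ler_sum => t _; apply: ler_wpM2l.
Qed.

Lemma distr_avg_ge (Z : T -> R) m : (forall t, m <= Z t) -> m <= \sum_t w t * Z t.
Proof.
case: w_distr => w_ge0 w_sum1 Z_ge; rewrite -[m]mul1r -w_sum1 mulr_suml.
by apply: ler_sum => t _; apply: ler_wpM2l.
Qed.

Lemma distr_avg_norm_le (Z : T -> R) m :
  (forall t, `|Z t| <= m) -> `|\sum_t w t * Z t| <= m.
Proof.
move=> Z_le; rewrite ler_norml distr_avg_le ?distr_avg_ge // => t;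
  by have /andP[] : - m <= Z t <= m by rewrite -ler_norml.
Qed.

End Averages.

Section Contraction.
Context {R : realType} {T : finType} {gamma : R}.
Hypothesis gamma_lt1 : gamma < 1.

Lemma contraction_le0 (Z : T -> R) :
  (forall m, (forall t, Z t <= m) -> forall t, Z t <= gamma * m) ->
  forall t, Z t <= 0.
Proof.
move=> contr t; have [u _ Zu_max] := @arg_maxP _ _ T t predT Z isT.
have Zu_le := contr (Z u) (fun v => Zu_max v isT) u.
have Zu_le0 : Z u <= 0.
  by rewrite -(@pmulr_rle0 _ (1 - gamma)) ?subr_gt0 //; lra.
exact: le_trans (Zu_max t isT) Zu_le0.
Qed.

Lemma contraction_norm_le (Z : T -> R) c :
  (forall m, (forall t, `|Z t| <= m) -> forall t, `|Z t| <= c + gamma * m) ->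
  forall t, `|Z t| <= c / (1 - gamma).
Proof.
move=> contr t; have [u _ Zu_max] := @arg_maxP _ _ T t predT (fun v => `|Z v|) isT.
have Zu_le := contr `|Z u| (fun v => Zu_max v isT) u.
apply: le_trans (Zu_max t isT) _; rewrite ler_pdivlMr ?subr_gt0 //; lra.
Qed.

End Contraction.

(* The sequence u n + c q^n / (1 - q) is nonincreasing and bounded below. *)
Lemma cvgn_geometric_increments (R : realType) (u : R^nat) (c q : R) :
  `|q| < 1 -> (forall n, `|u n.+1 - u n| <= c * q ^+ n) -> u @ \oo --> limn u.
Proof.
move=> normq_lt1 du_le; have q_lt1 : q < 1 by apply: le_lt_trans (ler_norm q) normq_lt1.
have omq_neq0 : 1 - q != 0 by rewrite subr_eq0 eq_sym lt_eqF.
pose tail n := c * q ^+ n / (1 - q).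
have tailS n : tail n.+1 = tail n - c * q ^+ n.
  by rewrite /tail exprS; field.
have tail_ge0 n : 0 <= tail n.
  apply: divr_ge0; last by rewrite subr_ge0 ltW.
  exact: le_trans (normr_ge0 _) (du_le n).
have du_bounds n : - (c * q ^+ n) <= u n.+1 - u n <= c * q ^+ n by rewrite -ler_norml.
have lower_incr : {homo (fun n => u n - tail n) : n m / (n <= m)%N >-> n <= m}.
  by apply/nondecreasing_seqP => n; rewrite tailS; have /andP[? ?] := du_bounds n; lra.
have upper_cvg : cvgn (fun n => u n + tail n).
  apply: nonincreasing_is_cvgn.
    by apply/nonincreasing_seqP => n; rewrite tailS; have /andP[? ?] := du_bounds n; lra.
  exists (u 0%N - tail 0%N) => _ [n _ <-].
  by have := lower_incr 0%N n isT; have := tail_ge0 n; lra.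
have tail_cvg : tail @ \oo --> 0.
  rewrite -(mul0r (1 - q)^-1) -(mulr0 c); apply: cvgMl; apply: cvgMr.
  exact: cvg_expr.
have u_eq : u = (fun n => (u n + tail n) - tail n).
  by apply: funext => n; rewrite addrK.
rewrite u_eq; apply/cvg_ex; exists (limn (fun n => u n + tail n) - 0).
exact: cvgB upper_cvg tail_cvg.
Qed.

Section Values.
Context {R : realType} {S A : finType} {tau : S -> A -> S -> R} {gamma : R}.
Hypothesis tau_distr : forall s a, is_distr (tau s a).
Hypothesis gamma_ge0 : 0 <= gamma.
Hypothesis gamma_lt1 : gamma < 1.

Local Notation Vfin := (Vfin tau gamma).
Local Notation Vpi := (Vpi tau gamma).
Local Notation reward := (S -> A -> S -> R).

Definition qval (rw : reward) (X : S -> R) s a : R :=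
  \sum_(s' : S) tau s a s' * (rw s a s' + gamma * X s').

Definition bellman_op (pi : S -> A -> R) rw X s : R :=
  \sum_(a : A) pi s a * qval rw X s a.

Lemma VfinS pi rw n s : Vfin pi rw n.+1 s = bellman_op pi rw (Vfin pi rw n) s.
Proof. by []. Qed.

Lemma qvalB rw X Y s a :
  qval rw X s a - qval rw Y s a = gamma * \sum_(s' : S) tau s a s' * (X s' - Y s').
Proof. by rewrite /qval -sumrB mulr_sumr; apply: eq_bigr => s' _; ring. Qed.

Lemma bellman_opB pi rw X Y s :
  bellman_op pi rw X s - bellman_op pi rw Y s =
  \sum_(a : A) pi s a * (qval rw X s a - qval rw Y s a).
Proof. by rewrite /bellman_op -sumrB; apply: eq_bigr => a _; ring. Qed.

Lemma ler_qval rw X Y s a : (forall s', X s' <= Y s') -> qval rw X s a <= qval rw Y s a.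
Proof.
move=> XY; rewrite -subr_ge0 qvalB mulr_ge0 // sumr_ge0 // => s' _.
by rewrite mulr_ge0 ?subr_ge0 //; case: (tau_distr s a).
Qed.

Definition rmax (rw : reward) : R :=
  \big[Order.max/0]_(x : S * A * S) `|rw x.1.1 x.1.2 x.2|.

Lemma rmax_ge0 rw : 0 <= rmax rw.
Proof. exact: bigmax_ge_id. Qed.

Lemma norm_qval_le rw X m s a :
  (forall s', `|X s'| <= m) -> `|qval rw X s a| <= rmax rw + gamma * m.
Proof.
move=> X_le; apply: distr_avg_norm_le => // s'.
apply: le_trans (ler_normD _ _) _; apply: lerD.
  exact: le_bigmax (fun x : S * A * S => `|rw x.1.1 x.1.2 x.2|) (s, a, s').
by rewrite normrM ger0_norm // ler_wpM2l.
Qed.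

Lemma norm_bellman_op_le pi rw X m s : is_policy pi ->
  (forall s', `|X s'| <= m) -> `|bellman_op pi rw X s| <= rmax rw + gamma * m.
Proof.
by move=> pi_policy X_le; apply: distr_avg_norm_le => // a; apply: norm_qval_le.
Qed.

Lemma bellman_op_cvg pi rw (X : nat -> S -> R) (Y : S -> R) s :
  (forall s', X n s' @[n --> \oo] --> Y s') ->
  bellman_op pi rw (X n) s @[n --> \oo] --> bellman_op pi rw Y s.
Proof.
move=> XY; apply: (cvg_big add_continuous) => // a _; apply: cvgMr.
apply: (cvg_big add_continuous) => // s' _; apply: cvgMr.
by apply: cvgD; [exact: cvg_cst | exact: cvgMr].
Qed.

Section PolicyValue.
Variables (pi : S -> A -> R) (rw : reward).
Hypothesis pi_policy : is_policy pi.
Let B := rmax rw / (1 - gamma).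

Let B_ge0 : 0 <= B.
Proof. by rewrite divr_ge0 ?rmax_ge0 // subr_ge0 ltW. Qed.

Let B_fix : rmax rw + gamma * B = B.
Proof. by rewrite /B; field; rewrite subr_eq0 eq_sym lt_eqF. Qed.

Lemma norm_Vfin_le n s : `|Vfin pi rw n s| <= B.
Proof.
elim: n s => [|n IHn] s; first by rewrite normr0.
by rewrite VfinS -B_fix; apply: norm_bellman_op_le.
Qed.

Lemma norm_VfinS_sub_le n s : `|Vfin pi rw n.+1 s - Vfin pi rw n s| <= B * gamma ^+ n.
Proof.
elim: n s => [|n IHn] s; first by rewrite subr0 expr0 mulr1 norm_Vfin_le.
rewrite VfinS (VfinS _ _ n) bellman_opB; apply: distr_avg_norm_le => // a.
rewrite qvalB normrM ger0_norm // exprS mulrCA ler_wpM2l //.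
exact: distr_avg_norm_le.
Qed.

Lemma Vfin_cvg s : Vfin pi rw n s @[n --> \oo] --> Vpi pi rw s.
Proof.
apply: (@cvgn_geometric_increments _ (fun n => Vfin pi rw n s) B gamma).
  by rewrite ger0_norm.
move=> n; exact: (norm_VfinS_sub_le n s).
Qed.

Lemma Vpi_fix s : Vpi pi rw s = bellman_op pi rw (Vpi pi rw) s.
Proof.
have VfinS_cvg := Vfin_cvg s; rewrite -cvg_shiftS in VfinS_cvg.
have bellman_Vfin_cvg := @bellman_op_cvg pi rw _ _ s (fun s' => Vfin_cvg s').
rewrite -(cvg_lim (@Rhausdorff R) VfinS_cvg).
by rewrite -(cvg_lim (@Rhausdorff R) bellman_Vfin_cvg).
Qed.

Lemma norm_Vpi_le s : `|Vpi pi rw s| <= B.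
Proof.
by apply: contraction_norm_le => // m Vpi_le s'; rewrite Vpi_fix norm_bellman_op_le.
Qed.

End PolicyValue.

Definition det_policy (d : S -> A) s a : R := (a == d s)%:R.

Lemma is_policy_det d : is_policy (det_policy d).
Proof.
move=> s; split=> [a|]; first by rewrite ler0n.
by rewrite (bigD1 (d s)) //= /det_policy eqxx big1 ?addr0 // => b /negbTE ->.
Qed.

Lemma bellman_op_det d rw X s : bellman_op (det_policy d) rw X s = qval rw X s (d s).
Proof.
rewrite /bellman_op (bigD1 (d s)) //= /det_policy eqxx mul1r big1 ?addr0 //.
by move=> b /negbTE ->; rewrite mul0r.
Qed.

Lemma le_sub_super_solution rw (d : S -> A) (X Y : S -> R) :
  (forall s, X s <= qval rw X s (d s)) -> (forall s, qval rw Y s (d s) <= Y s) ->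
  forall s, X s <= Y s.
Proof.
move=> X_sub Y_super s; rewrite -subr_le0; move: s.
apply: (@contraction_le0 _ _ _ gamma_lt1 (fun s => X s - Y s)) => m XY_le s.
have := X_sub s; have := Y_super s.
have : gamma * \sum_(s' : S) tau s (d s) s' * (X s' - Y s') <= gamma * m.
  by rewrite ler_wpM2l // distr_avg_le.
rewrite -(qvalB rw); lra.
Qed.

Definition bellman_solution rw (Psi : S -> R) : Prop :=
  (forall s a, qval rw Psi s a <= Psi s) /\ (forall s, exists a, qval rw Psi s a = Psi s).

Lemma bellman_solution_unique rw Psi Phi :
  bellman_solution rw Psi -> bellman_solution rw Phi -> Psi = Phi.
Proof.
have le_sol X Y : bellman_solution rw X -> bellman_solution rw Y -> forall s, X s <= Y s.
  case=> _ /choice[d X_attained] [Y_super _].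
  by apply: (@le_sub_super_solution rw d) => s; [rewrite X_attained | apply: Y_super].
move=> Psi_sol Phi_sol; apply: funext => s.
by apply/eqP; rewrite eq_le !le_sol.
Qed.

Section Optimal.
Variable rw : reward.
Hypothesis A_gt0 : (0 < #|A|)%N.
Local Notation V := (Vstar tau gamma rw).

Let values s := [set Vpi pi rw s | pi in @is_policy R S A].

Let values_sup s : has_sup (values s).
Proof.
split.
  have [a0 _] := card_gt0P A_gt0; pose pi0 := det_policy (fun=> a0).
  by exists (Vpi pi0 rw s), pi0; first exact: is_policy_det.
exists (rmax rw / (1 - gamma)) => _ [pi pi_policy <-].
apply: le_trans (ler_norm _) _; exact: norm_Vpi_le.
Qed.

Lemma Vpi_le_Vstar pi s : is_policy pi -> Vpi pi rw s <= V s.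
Proof. by move=> pi_policy; apply: (sup_upper_bound (values_sup s)); exists pi. Qed.

Lemma Vstar_le s x : (forall pi, is_policy pi -> Vpi pi rw s <= x) -> V s <= x.
Proof.
by move=> Vpi_le; apply: ge_sup (proj1 (values_sup s)) _ => _ [pi /Vpi_le le_x <-].
Qed.

(* [V] is attained by the deterministic policy that is greedy for [qval rw V]. *)
Lemma bellman_solution_Vstar : bellman_solution rw V.
Proof.
have [a0 _] := card_gt0P A_gt0.
have /choice[d d_greedy] : forall s, exists a, forall b, qval rw V s b <= qval rw V s a.
  move=> s; have [a _ a_max] := @arg_maxP _ _ A a0 predT (qval rw V s) isT.
  by exists a => b; apply: a_max.
have V_sub s : V s <= qval rw V s (d s).
  apply: Vstar_le => pi pi_policy; rewrite Vpi_fix //.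
  apply: (distr_avg_le (pi_policy s)) => a.
  by apply: le_trans (d_greedy s a); apply: ler_qval => s'; apply: Vpi_le_Vstar.
pose Vd := Vpi (det_policy d) rw.
have Vd_fix s : Vd s = qval rw Vd s (d s).
  by rewrite /Vd Vpi_fix ?(bellman_op_det d) //; apply: is_policy_det.
have V_eq : V = Vd.
  apply: funext => s; apply/eqP.
  rewrite eq_le Vpi_le_Vstar ?andbT; last exact: is_policy_det.
  by apply: (@le_sub_super_solution rw d V Vd V_sub) => s'; rewrite -Vd_fix.
have V_fix s : V s = qval rw V s (d s) by rewrite {1 2}V_eq -Vd_fix.
by split=> s; [move=> a; rewrite V_fix | exists (d s)].
Qed.

Lemma opt_actsP s a : reflect (qval rw V s a = V s) (a \in opt_acts tau gamma rw s).
Proof.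
have [V_super V_attained] := bellman_solution_Vstar.
rewrite inE /Astar; apply: (iffP forallP) => [a_max | qa_eq b].
  have [b qb_eq] := V_attained s; have := a_max b; have := V_super s a.
  rewrite /Qstar -/(qval rw V s b) -/(qval rw V s a) qb_eq; lra.
by rewrite /Qstar -/(qval rw V s b) -/(qval rw V s a) qa_eq lerD2r V_super.
Qed.

Lemma opt_acts_neq0 s : opt_acts tau gamma rw s != finset.set0.
Proof.
have [a qa_eq] := (bellman_solution_Vstar).2 s.
by apply/set0Pn; exists a; apply/opt_actsP.
Qed.

Lemma opt_preservingP rw0 (O : S -> {set A}) : (forall s, O s != finset.set0) ->
  opt_preserving tau gamma rw0 rw O <-> O = opt_acts tau gamma rw.
Proof.
have [V_super _] := bellman_solution_Vstar.
move=> O_neq0; split=> [[Psi Psi_opt] | ->].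
  have Psi_sol : bellman_solution rw Psi.
    split=> [s a | s]; first exact: (Psi_opt s a).1.
    by have /set0Pn[a /(Psi_opt s a).2] := O_neq0 s; exists a.
  have Psi_eq := @bellman_solution_unique rw _ _ Psi_sol bellman_solution_Vstar.
  rewrite Psi_eq in Psi_opt; apply: funext => s; apply/setP => a.
  by apply/idP/opt_actsP => /(Psi_opt s a).2.
by exists V => s a; split; [exact: V_super | split=> /opt_actsP].
Qed.

End Optimal.

Section Trajectories.
Context {mu0 : S -> R} {g : {set A} -> A -> R}.
Hypothesis mu0_distr : is_distr mu0.
Hypothesis g_support : forall B : {set A}, B != finset.set0 ->
  is_distr (g B) /\ (forall a, (0 < g B a) <-> a \in B).
Hypothesis A_gt0 : (0 < #|A|)%N.

Local Notation piR := (piR tau gamma g).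
Local Notation prefix_prob := (prefix_prob tau mu0 gamma g).
Local Notation visited := (visited tau mu0 gamma g).
Local Notation opt_acts := (opt_acts tau gamma).

Definition reach_prob (pi : S -> A -> R) (p : seq (S * A)) s : R :=
  if p is sa :: rest then
    mu0 sa.1 * chain_prob tau pi sa rest * tau (last sa rest).1 (last sa rest).2 s
  else mu0 s.

Lemma chain_prob_rcons pi sa rest sa' :
  chain_prob tau pi sa (rcons rest sa') =
  chain_prob tau pi sa rest * tau (last sa rest).1 (last sa rest).2 sa'.1 * pi sa'.1 sa'.2.
Proof. by elim: rest sa => [|sa1 rest IHrest] sa //=; rewrite IHrest; ring. Qed.

Lemma prefix_prob_rcons rw p s a :
  prefix_prob rw (rcons p (s, a)) = reach_prob (piR rw) p s * piR rw s a.
Proof. by case: p => [|sa rest] //=; rewrite chain_prob_rcons /=; ring. Qed.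

Lemma reach_prob_eq rw rw' p s : prefix_prob rw p = prefix_prob rw' p ->
  reach_prob (piR rw) p s = reach_prob (piR rw') p s.
Proof. by case: p => [|sa rest] //= ->. Qed.

Lemma chain_prob_ge0 pi sa rest :
  (forall s a, 0 <= pi s a) -> 0 <= chain_prob tau pi sa rest.
Proof.
move=> pi_ge0; elim: rest sa => [|sa' rest IHrest] sa //=.
by rewrite !mulr_ge0 // (tau_distr sa.1 sa.2).1.
Qed.

Lemma reach_prob_ge0 pi p s : (forall s a, 0 <= pi s a) -> 0 <= reach_prob pi p s.
Proof.
move=> pi_ge0; case: p => [|sa rest] /=; first exact: mu0_distr.1.
by rewrite !mulr_ge0 ?chain_prob_ge0 ?mu0_distr.1 ?(tau_distr _ _).1.
Qed.

Lemma piR_gt0 rw s a : 0 < piR rw s a <-> a \in opt_acts rw s.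
Proof. exact: (g_support _ (opt_acts_neq0 rw A_gt0 s)).2 a. Qed.

Lemma piR_ge0 rw s a : 0 <= piR rw s a.
Proof. exact: (g_support _ (opt_acts_neq0 rw A_gt0 s)).1.1 a. Qed.

Lemma visitedP rw s : visited rw s <-> exists p, 0 < reach_prob (piR rw) p s.
Proof.
split=> [[p [a]] | [p reach_gt0]].
  rewrite prefix_prob_rcons => prob_gt0; exists p.
  rewrite lt_def reach_prob_ge0 ?andbT //; last exact: piR_ge0.
  by apply/eqP => reach0; move: prob_gt0; rewrite reach0 mul0r ltxx.
have /set0Pn[a a_opt] := opt_acts_neq0 rw A_gt0 s.
by exists p, a; rewrite prefix_prob_rcons mulr_gt0 //; apply/piR_gt0.
Qed.

Lemma piR_inj rw rw' s : piR rw s =1 piR rw' s -> opt_acts rw s = opt_acts rw' s.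
Proof.
move=> piR_eq; apply/setP => a.
by apply/idP/idP => /piR_gt0 a_pos; apply/piR_gt0; [rewrite -piR_eq | rewrite piR_eq].
Qed.

Lemma traj_distr_eqP rw rw' : traj_distr_eq tau mu0 gamma g rw rw' <->
  (forall s, visited rw s -> opt_acts rw s = opt_acts rw' s).
Proof.
split=> [traj_eq s /visitedP[p reach_gt0] | opt_eq p].
  have reach_eq := @reach_prob_eq rw rw' p s (traj_eq p).
  apply: piR_inj => a; apply: (mulfI (lt0r_neq0 reach_gt0)).
  by rewrite -prefix_prob_rcons traj_eq prefix_prob_rcons reach_eq.
elim/last_ind: p => [|p [s a] IHp] //.
rewrite !prefix_prob_rcons -(@reach_prob_eq rw rw' p s IHp).
have [reach0 | reach_neq0] := eqVneq (reach_prob (piR rw) p s) 0.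
  by rewrite reach0 !mul0r.
have visited_s : visited rw s.
  apply/visitedP; exists p; rewrite lt_def reach_neq0 reach_prob_ge0 //.
  exact: piR_ge0.
by rewrite /Defs.piR (opt_eq s visited_s).
Qed.

End Trajectories.
End Values.

Theorem theorem3p8 (R : realType) (S A : finType)
  (tau : S -> A -> S -> R) (mu0 : S -> R) (gamma : R)
  (g : {set A} -> A -> R)
  (hA : (0 < #|A|)%N)
  (htau : forall s a, is_distr (tau s a))
  (hmu0 : is_distr mu0)
  (hgamma : 0 < gamma < 1)
  (hg : forall B : {set A}, B != finset.set0 ->
          is_distr (g B) /\ (forall a, (0 < g B a) <-> a \in B)) :
  forall rw rw' : S -> A -> S -> R,
    traj_distr_eq tau mu0 gamma g rw rw' <->
    exists O : S -> {set A},
      frakO tau mu0 gamma g rw O /\ opt_preserving tau gamma rw rw' O.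
Proof.
have [gamma_ge0 gamma_lt1] : 0 <= gamma /\ gamma < 1 by case/andP: hgamma => /ltW.
have opt_acts_nonempty := opt_acts_neq0 htau gamma_ge0 gamma_lt1 ^~ hA.
move=> rw rw'; rewrite (traj_distr_eqP htau gamma_ge0 gamma_lt1 hmu0 hg hA).
have opt_preservingP := opt_preservingP htau gamma_ge0 gamma_lt1 rw' hA rw.
split.
  move=> opt_acts_eq; exists (opt_acts tau gamma rw').
  by split; [split=> // s /opt_acts_eq | apply/opt_preservingP].
case=> O [[nonempty_O visited_O] /(opt_preservingP O nonempty_O) O_eq] s /visited_O.
by rewrite O_eq.
Qed.
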